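(* Let $m\ge2$ be an integer, $q\ge\frac2m$, let $E_1,\dots,E_m,F$ be Banach spaces and $T\in\mathcal{L}(E_1,\dots,E_m;F)$. If $T$ has multi-cotype $q$, then $T$ has cotype $q$.
   Context: $r_j$ is the $j$-th Rademacher function and for finitely many vectors $x_1,\dots,x_n$ in a Banach space $E$, $\|(x_j)_{j=1}^n\|_{Rad(E)}=\left(\int_0^1\|\sum_{j=1}^n r_j(t)x_j\|^2dt\right)^{1/2}$. $T$ has multi-cotype $q$ if there is $C>0$ such that for all $n_1,\dots,n_m$ and all $x^{(i)}_1,\dots,x^{(i)}_{n_i}\in E_i$, $\left(\sum_{j_1,\dots,j_m=1}^{n_1,\dots,n_m}\|T(x^{(1)}_{j_1},\dots,x^{(m)}_{j_m})\|^q\right)^{1/q}\le C\prod_{i=1}^m\|(x^{(i)}_j)_{j=1}^{n_i}\|_{Rad(E_i)}$. $T$ has cotype $q$ (in the sense of Botelho–Campos) if there is $C>0$ such that for all $n$ and all $x^{(i)}_1,\dots,x^{(i)}_n\in E_i$, $\left(\sum_{j=1}^{n}\|T(x^{(1)}_{j},\dots,x^{(m)}_{j})\|^q\right)^{1/q}\le C\prod_{i=1}^m\|(x^{(i)}_j)_{j=1}^{n}\|_{Rad(E_i)}$. *)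

From HB Require Import structures.
From mathcomp Require Import all_boot all_order all_algebra.
From mathcomp Require Import all_classical all_reals all_analysis.
Set Implicit Arguments. Unset Strict Implicit. Unset Printing Implicit Defensive.
Import Order.TTheory GRing.Theory Num.Theory.
Import numFieldNormedType.Exports.
Local Open Scope classical_set_scope.
Local Open Scope ring_scope.

Definition rademacher {R : realType} (j : nat) (t : R) : R :=
  Num.sg (sin (2 ^+ j * pi * t)).

(* ||(x_j)_{j=1}^n||_{Rad(E)} = (int_0^1 ||sum_j r_j(t) x_j||^2 dt)^(1/2).
   The vector x_{j} (j = 1..n) is stored as x (j-1) with x : 'I_n -> E. *)
Definition rad_norm {R : realType} (E : normedModType R) (n : nat)
    (x : 'I_n -> E) : R :=
  Num.sqrt (Rintegral (@lebesgue_measure R) `[0%R, 1%R]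
    (fun t => `| \sum_(j < n) rademacher j.+1 t *: x j | ^+ 2)).

Definition multilinear {R : realType} (m : nat) (E : 'I_m -> normedModType R)
    (F : normedModType R) (T : (forall i, E i) -> F) : Prop :=
  forall (x : forall i, E i) (i : 'I_m) (a : R) (u v : E i),
    T (@dfwith _ _ x i ((a *: u + v))) = a *: T (@dfwith _ _ x i (u)) + T (@dfwith _ _ x i (v)).

Definition has_multi_cotype {R : realType} (m : nat) (E : 'I_m -> normedModType R)
    (F : normedModType R) (T : (forall i, E i) -> F) (q : R) : Prop :=
  exists C : R, 0 < C /\
  forall (n : 'I_m -> nat) (x : forall i : 'I_m, 'I_(n i) -> E i),
    (\sum_(j : {dffun forall i : 'I_m, 'I_(n i)})
        `| T (fun i => x i (j i)) | `^ q) `^ (q^-1)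
    <= C * \prod_(i < m) rad_norm (x i).

(* cotype q in the sense of Botelho--Campos *)
Definition has_cotype_BC {R : realType} (m : nat) (E : 'I_m -> normedModType R)
    (F : normedModType R) (T : (forall i, E i) -> F) (q : R) : Prop :=
  exists C : R, 0 < C /\
  forall (n : nat) (x : forall i : 'I_m, 'I_n -> E i),
    (\sum_(j < n) `| T (fun i => x i j) | `^ q) `^ (q^-1)
    <= C * \prod_(i < m) rad_norm (x i).

Definition continuous_on_product {R : realType} (m : nat)
    (E : 'I_m -> normedModType R) (F : normedModType R)
    (T : (forall i, E i) -> F) : Prop :=
  continuous (T : prod_topology (fun i => E i) -> F).

From HB Require Import structures.
From mathcomp Require Import all_boot all_order all_algebra.
From mathcomp Require Import all_classical all_reals all_analysis.
Import Order.TTheory GRing.Theory Num.Theory.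
Import numFieldNormedType.Exports.
Local Open Scope ring_scope.

(* The cotype sum runs over the diagonal [j1 = ... = jm] of the index set of
   the multi-cotype sum (with all n_i equal); since the terms are nonnegative
   and [x |-> x `^ q^-1] is monotone, the multi-cotype inequality implies the
   cotype inequality with the same constant. *)

Lemma ler_sum_inj (R : numDomainType) (A B : finType) (h : A -> B)
    (f : B -> R) :
  injective h -> (forall b, 0 <= f b) -> \sum_a f (h a) <= \sum_b f b.
Proof.
move=> h_inj f_ge0.
rewrite -(big_imset _ (A := predT)) /=; last by move=> a b _ _; apply: h_inj.
rewrite [leLHS]big_mkcond /=; apply: ler_sum => b _.
by case: ifP => _; [exact: lexx | exact: f_ge0].
Qed.

Section DiagonalIndex.

Variables (I : finType) (n : nat).

Definition diag_index (j : 'I_n) : {dffun forall i : I, 'I_n} :=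
  [ffun => j].

Lemma diag_index_inj : I -> injective diag_index.
Proof. by move=> i0 j k /ffunP/(_ i0); rewrite !ffunE. Qed.

End DiagonalIndex.

Lemma has_multi_cotype_has_cotype_BC (R : realType) (m : nat)
    (E : 'I_m -> normedModType R) (F : normedModType R)
    (T : (forall i, E i) -> F) (q : R) :
  (0 < m)%N -> 0 < q -> has_multi_cotype T q -> has_cotype_BC T q.
Proof.
move=> m_gt0 q_gt0 [C [C_gt0 multiC]]; exists C; split => // n x.
apply: le_trans (multiC (fun _ => n) x).
apply: ge0_ler_powR; first by rewrite invr_ge0 ltW.
1, 2: by rewrite nnegrE; apply: sumr_ge0 => j _; apply: powR_ge0.
pose g (d : {dffun forall i : 'I_m, 'I_n}) := `| T (fun i => x i (d i)) | `^ q.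
have -> : \sum_(j < n) `| T (fun i => x i j) | `^ q
          = \sum_(j < n) g (diag_index 'I_m n j).
  apply: eq_bigr => j _; congr (`| T _ | `^ q).
  by apply: functional_extensionality_dep => i; rewrite ffunE.
have diag_inj := diag_index_inj 'I_m n (Ordinal m_gt0).
exact: (ler_sum_inj _ _ _ _ g diag_inj (fun d => powR_ge0 _ _)).
Qed.

Theorem mainTheorem11 (R : realType) (m : nat) (E : 'I_m -> completeNormedModType R)
    (F : completeNormedModType R) (T : (forall i, E i) -> F) (q : R) :
  (2 <= m)%N -> 2 / m%:R <= q ->
  multilinear T -> continuous_on_product T ->
  has_multi_cotype T q -> has_cotype_BC T q.
Proof.
move=> m_ge2 q_ge _ _; have m_gt0 : (0 < m)%N by apply: leq_trans m_ge2.
apply: has_multi_cotype_has_cotype_BC => //.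
by apply: lt_le_trans q_ge; rewrite divr_gt0 // ltr0n.
Qed.
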